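(* Let $n\ge 2$, let $f:\{0,1\}^n\to\{0,1\}^n$ and $\alpha\in\{0,1\}$. Then every arc of $G(f^\alpha)$ (with its sign) is an arc of $G(f)$, i.e. $G(f^\alpha)$ is a subgraph of $G(f)$. Furthermore, if $G(f)$ has no arc from vertex $n$ to a vertex $i\neq n$, then $G(f^\alpha)=G(f)\setminus n$, the signed graph obtained from $G(f)$ by removing vertex $n$ and all arcs having $n$ as initial or final vertex.
   Context: For $x\in\{0,1\}^m$ and $j\in\{1,\dots,m\}$, $\overline{x}^j$ denotes $x$ with its $j$-th component switched. For $g=(g_1,\dots,g_m):\{0,1\}^m\to\{0,1\}^m$, the discrete Jacobian entries are $g_{ij}(x)=\frac{g_i(\overline{x}^j)-g_i(x)}{\overline{x}^j_j-x_j}\in\{-1,0,1\}$. The interaction graph $G(g)$ is the signed directed graph with vertex set $\{1,\dots,m\}$ having an arc from $j$ to $i$ of sign $s\in\{-1,1\}$ whenever $g_{ij}(x)=s$ for at least one $x\in\{0,1\}^m$ (both a positive and a negative arc between the same pair are allowed). For $\alpha\in\{0,1\}$, $f^\alpha:\{0,1\}^{n-1}\to\{0,1\}^{n-1}$ is defined by $f^\alpha(x)=(f_1(x,\alpha),\dots,f_{n-1}(x,\alpha))$. *)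

From mathcomp Require Import all_boot all_order all_algebra.
Set Implicit Arguments. Unset Strict Implicit. Unset Printing Implicit Defensive.
Import GRing.Theory Num.Theory.
Local Open Scope ring_scope.

(* A point of {0,1}^m is a finite function 'I_m -> bool (false = 0, true = 1);
   component j (1-based in the paper) is index j-1 here. *)
Definition pt (m : nat) := {ffun 'I_m -> bool}.

Definition flip (m : nat) (x : pt m) (j : 'I_m) : pt m :=
  [ffun k => if k == j then ~~ x k else x k].

Definition b2i (b : bool) : int := if b then 1 else 0.

(* discrete Jacobian entry g_ij(x) =
   (g_i(flip x j) - g_i(x)) / ((flip x j)_j - x_j).
   The denominator is +-1, so dividing by it equals multiplying by it. *)
Definition jac (m : nat) (g : pt m -> pt m) (i j : 'I_m) (x : pt m) : int :=
  (b2i (g (flip x j) i) - b2i (g x i)) * (b2i (flip x j j) - b2i (x j)).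

(* arc of G(g) from j to i with sign s (s = 1 or s = -1) *)
Definition sarc (m : nat) (g : pt m -> pt m) (j i : 'I_m) (s : int) : Prop :=
  exists x : pt m, jac g i j x = s.

(* (x, a) in {0,1}^n for x in {0,1}^(n-1): the last component is a *)
Definition ext (n : nat) (a : bool) (x : pt n.-1) : pt n :=
  [ffun k : 'I_n => if (insub (val k) : option 'I_n.-1) is Some k'
                     then x k' else a].

Definition emb (n : nat) (i : 'I_n.-1) : 'I_n := widen_ord (leq_pred n) i.

Definition restr (n : nat) (f : pt n -> pt n) (a : bool) (x : pt n.-1) : pt n.-1 :=
  [ffun i => f (ext a x) (emb i)].

From mathcomp Require Import all_boot all_order all_algebra.
Set Implicit Arguments. Unset Strict Implicit. Unset Printing Implicit Defensive.
Local Open Scope ring_scope.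

(* The Jacobian of f^a at x is the principal submatrix (indices < n) of the
   Jacobian of f at (x, a), so every signed arc of G(f^a) is one of G(f).
   Conversely, if vertex n has no arc to i <> n, then f_i does not depend on
   x_n; switching x_n then leaves each entry f_ij (j <> n) unchanged, so an
   arc j -> i of G(f) witnessed at x is also witnessed at a point whose last
   component is a, i.e. at a point of the form (x', a). *)

Definition pt_init (n : nat) (z : pt n) : pt n.-1 := [ffun k => z (emb k)].

Lemma flip_self (m : nat) (x : pt m) (j : 'I_m) : flip x j j = ~~ x j.
Proof. by rewrite /flip ffunE eqxx. Qed.

Lemma flip_neq (m : nat) (x : pt m) (j k : 'I_m) : k != j -> flip x j k = x k.
Proof. by move=> /negbTE kj; rewrite /flip ffunE kj. Qed.

Lemma flipC (m : nat) (x : pt m) (j k : 'I_m) :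
  flip (flip x j) k = flip (flip x k) j.
Proof.
apply/ffunP => l; rewrite /flip !ffunE.
by case: (eqVneq l j) => [->|_]; case: (eqVneq _ k).
Qed.

Lemma flip_invariant_of_no_arc (m : nat) (g : pt m -> pt m) (j i : 'I_m) :
  ~ sarc g j i 1 -> ~ sarc g j i (-1) -> forall x, g (flip x j) i = g x i.
Proof.
move=> no_pos no_neg x.
case E: (g (flip x j) i); case F: (g x i); case X: (x j) => //;
  first [ by case: no_pos; exists x; rewrite /jac flip_self E F X
        | by case: no_neg; exists x; rewrite /jac flip_self E F X ].
Qed.

Lemma jac_flip_invariant (m : nat) (g : pt m -> pt m) (i j l : 'I_m) (x : pt m) :
  (forall w, g (flip w l) i = g w i) -> j != l ->
  jac g i j (flip x l) = jac g i j x.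
Proof. by move=> g_inv jl; rewrite /jac !flip_self flipC !g_inv flip_neq. Qed.

Section LastComponent.

Variable n : nat.

Lemma emb_neq_last (l : 'I_n) (k : 'I_n.-1) : val l = n.-1 -> emb k != l.
Proof.
by move=> hl; apply/eqP => /(congr1 val) /= ek; move: (ltn_ord k); rewrite ek hl ltnn.
Qed.

Lemma ext_emb (a : bool) (x : pt n.-1) (k : 'I_n.-1) : ext a x (emb k) = x k.
Proof.
rewrite /ext ffunE (insubT (fun m => m < n.-1)%N (ltn_ord k)) /=.
by congr (x _); apply: val_inj.
Qed.

Lemma ext_last (a : bool) (x : pt n.-1) (l : 'I_n) : val l = n.-1 -> ext a x l = a.
Proof. by move=> hl; rewrite /ext ffunE insubN // hl ltnn. Qed.

Lemma ext_pt_init (z : pt n) (l : 'I_n) : val l = n.-1 -> ext (z l) (pt_init z) = z.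
Proof.
move=> hl; apply/ffunP => k; have [hk | hk] := ltnP (val k) n.-1.
  have -> : k = emb (Ordinal hk) by apply: val_inj.
  by rewrite ext_emb ffunE.
have -> : k = l.
  apply: val_inj; apply/eqP; rewrite hl eqn_leq hk andbT -ltnS.
  exact: leq_trans (ltn_ord k) (leqSpred n).
by rewrite ext_last.
Qed.

Lemma pt_init_flip_last (z : pt n) (l : 'I_n) :
  val l = n.-1 -> pt_init (flip z l) = pt_init z.
Proof.
by move=> hl; apply/ffunP => k; rewrite [LHS]ffunE [RHS]ffunE flip_neq ?emb_neq_last.
Qed.

Lemma ext_pt_init_flip (b : bool) (z : pt n) (l : 'I_n) : val l = n.-1 ->
  ext b (pt_init z) = if b == z l then z else flip z l.
Proof.
move=> hl; case: eqP => [-> | /eqP bz]; first exact: ext_pt_init.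
have -> : b = flip z l l by rewrite flip_self; move: bz; case: b; case: (z l).
by rewrite -(pt_init_flip_last z hl) ext_pt_init.
Qed.

Lemma flip_ext (a : bool) (x : pt n.-1) (j : 'I_n.-1) :
  flip (ext a x) (emb j) = ext a (flip x j).
Proof.
apply/ffunP => k; rewrite /flip /ext !ffunE.
have [hk | hk] := ltnP (val k) n.-1.
  by rewrite !(insubT (fun m => m < n.-1)%N hk) /= ffunE.
have -> : (k == emb j) = false.
  by apply/negbTE/eqP => kj; move: hk; rewrite kj /= leqNgt ltn_ord.
by rewrite !insubN // -leqNgt.
Qed.

Variables (f : pt n -> pt n) (a : bool).

Lemma restrE (x : pt n.-1) (i : 'I_n.-1) : restr f a x i = f (ext a x) (emb i).
Proof. exact: ffunE. Qed.

Lemma jac_restr (i j : 'I_n.-1) (x : pt n.-1) :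
  jac (restr f a) i j x = jac f (emb i) (emb j) (ext a x).
Proof. by rewrite /jac !flip_self !restrE -flip_ext ext_emb. Qed.

Lemma sarc_restr (j i : 'I_n.-1) (s : int) :
  sarc (restr f a) j i s -> sarc f (emb j) (emb i) s.
Proof. by move=> [x hx]; exists (ext a x); rewrite -jac_restr. Qed.

Lemma sarc_restr_of_indep (l : 'I_n) (j i : 'I_n.-1) (s : int) : val l = n.-1 ->
  (forall w, f (flip w l) (emb i) = f w (emb i)) ->
  sarc f (emb j) (emb i) s -> sarc (restr f a) j i s.
Proof.
move=> hl f_inv [x hx]; exists (pt_init x).
rewrite jac_restr (ext_pt_init_flip _ _ hl); case: eqP => // _.
by rewrite jac_flip_invariant ?emb_neq_last.
Qed.

End LastComponent.

Theorem lemma1 (n : nat) (hn : (2 <= n)%N) (f : pt n -> pt n) (a : bool) :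
  (forall (j i : 'I_n.-1) (s : int), (s = 1 \/ s = -1) ->
     sarc (restr f a) j i s -> sarc f (emb j) (emb i) s) /\
  ((forall (v i : 'I_n) (s : int), val v = n.-1 -> i != v -> (s = 1 \/ s = -1) ->
       ~ sarc f v i s) ->
   forall (j i : 'I_n.-1) (s : int), (s = 1 \/ s = -1) ->
     (sarc (restr f a) j i s <-> sarc f (emb j) (emb i) s)).
Proof.
split=> [j i s _ | no_arc j i s _]; first exact: sarc_restr.
split; first exact: sarc_restr.
have hl : (n.-1 < n)%N by rewrite ltn_predL (leq_trans _ hn).
pose l := Ordinal hl.
apply: (@sarc_restr_of_indep n f a l) => //.
have emb_il : emb i != l by rewrite emb_neq_last.
by apply: flip_invariant_of_no_arc; apply: no_arc => //; [left | right].
Qed.
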